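(* Let $g_1, g_2$ be integers with $g_1 > g_2 \geq 2$, and let $\beta > 0$ be a real number. Let $(a_n)_{n\geq 1}$ be a sequence of positive integers with $a_1 \geq 2$ and $a_{n+1} = a_n^{1+\beta}$ for all $n \geq 1$. Define $$\theta_1 = \sum_{n=1}^{\infty} \frac{1}{g_1^{a_n}}, \qquad \theta_2 = \sum_{n=1}^{\infty} \frac{1}{g_2^{a_n}}.$$ Then each of the real numbers $\theta_1 + \theta_2$, $\theta_1 - \theta_2$, $\theta_1 \theta_2$ and $\theta_1/\theta_2$ is transcendental. *)

From HB Require Import structures.
From mathcomp Require Import all_boot all_order all_algebra.
From mathcomp Require Import all_classical all_reals all_analysis.
Set Implicit Arguments. Unset Strict Implicit. Unset Printing Implicit Defensive.
Import Order.TTheory GRing.Theory Num.Theory.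
Local Open Scope ring_scope.

Definition algebraic (R : realType) (x : R) : Prop :=
  exists p : {poly rat}, p != 0 /\ root (map_poly (@ratr R) p) x.

Definition transcendental (R : realType) (x : R) : Prop := ~ algebraic x.

(* Each theta_g is approximated by its partial sums, rationals with denominator
   g^(a n), to within a constant times g^-(a (n+1)).  Adding, subtracting,
   multiplying or dividing the partial sums for g1 and g2 therefore gives
   rationals p/q with q <= (g1 g2)^(a n) at distance O(g2^-(a (n+1))) from the
   corresponding combination of theta1 and theta2.  Since a (n+1) / a n
   = a n ^ beta is unbounded, these approximations beat every power of q, and
   Liouville's inequality yields transcendence.  That the approximations are
   never exact comes from g2 < g1: the tail of theta1 is negligible compared
   with that of theta2, so the two tails cannot cancel. *)

From HB Require Import structures.
From mathcomp Require Import all_boot all_order all_algebra.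
From mathcomp Require Import all_classical all_reals all_analysis.
From mathcomp Require Import ring lra zify.
Set Implicit Arguments. Unset Strict Implicit. Unset Printing Implicit Defensive.
Import Order.TTheory GRing.Theory Num.Theory.
Local Open Scope ring_scope.

Definition rat_approx (R : realType) (x : R) (Q : nat) (eps : R) : Prop :=
  exists (p : int) (q : nat),
    (2 <= q <= Q)%N /\ 0 < `|x - p%:~R / q%:R| <= eps.

Lemma rat_approx_le (R : realType) (x : R) (Q : nat) (eps eps' : R) :
  eps <= eps' -> rat_approx x Q eps -> rat_approx x Q eps'.
Proof.
move=> le_eps [p [q [qQ /andP[xy0 xy_le]]]]; exists p, q; split => //.
by rewrite xy0 (le_trans xy_le le_eps).
Qed.

Section Liouville.
Variable R : realType.

Lemma rat_poly_int_roots (P : {poly rat}) : P != 0 -> exists Z : {poly int},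
  [/\ Z != 0, size Z = size P & forall y : R,
     root (map_poly ratr P) y = root (map_poly intr Z) y].
Proof.
move=> P0; have [Z [c c0 EP]] := rat_poly_scale P.
have szZ : size Z = size P.
  by rewrite EP size_scale ?invr_eq0 ?intr_eq0 // size_map_inj_poly //; apply: intr_inj.
exists Z; split=> [|//|y]; first by rewrite -size_poly_eq0 szZ size_poly_eq0.
have -> : map_poly ratr P = ratr (c%:~R^-1) *: map_poly (intr : int -> R) Z.
  rewrite EP map_polyZ -map_poly_comp; congr (_ *: _).
  by apply: eq_map_poly => z /=; rewrite ratr_int.
by rewrite /root hornerZ mulf_eq0 fmorph_eq0 invr_eq0 intr_eq0 (negPf c0).
Qed.

Lemma int_poly_horner_rat_ge (Z : {poly int}) (p : int) (q : nat) : (0 < q)%N ->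
  ~~ root (map_poly intr Z) (p%:~R / q%:R : R) ->
  1 <= q%:R ^+ size Z * `|(map_poly intr Z).[p%:~R / q%:R] : R|.
Proof.
move=> q0 nz; set s := size Z.
have q0R : (q%:R : R) != 0 by rewrite pnatr_eq0 -lt0n.
have E : q%:R ^+ s * (map_poly intr Z).[p%:~R / q%:R] =
   (\sum_(i < s) Z`_i * p ^+ i * (q%:Z) ^+ (s - i))%:~R :> R.
  rewrite (@horner_coef_wide _ s); last first.
    by rewrite size_map_inj_poly //; apply: intr_inj.
  rewrite mulr_sumr rmorph_sum; apply: eq_bigr => i _.
  rewrite coef_map /= !rmorphM /= !rmorphXn /= pmulrn.
  rewrite -{1}(subnKC (ltnW (ltn_ord i))) exprD exprMn exprVn.
  by field; rewrite expf_eq0 (negPf q0R) andbF.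
have num_neq0 : (\sum_(i < s) Z`_i * p ^+ i * (q%:Z) ^+ (s - i)) != 0.
  by rewrite -(intr_eq0 R) -E mulf_eq0 negb_or expf_eq0 (negPf q0R) andbF.
rewrite -(ger0_norm (exprn_ge0 s (ler0n R q))) -normrM E -intr_norm ler1z.
by rewrite -gtz0_ge1 normr_gt0.
Qed.

Definition taylor_norm1 (P : {poly R}) (x : R) : R :=
  \sum_(i < size (P \Po ('X + x%:P))) `|(P \Po ('X + x%:P))`_i|.

Lemma taylor_norm1_ge0 (P : {poly R}) (x : R) : 0 <= taylor_norm1 P x.
Proof. by rewrite sumr_ge0. Qed.

Lemma horner_le_dist_root (P : {poly R}) (x y : R) : root P x -> `|y - x| <= 1 ->
  `|P.[y]| <= taylor_norm1 P x * `|y - x|.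
Proof.
move=> /eqP Px yx1; rewrite /taylor_norm1; set W := P \Po ('X + x%:P).
have -> : P.[y] = W.[y - x] by rewrite horner_comp hornerD hornerX hornerC subrK.
have W0 : W`_0 = 0 by rewrite -horner_coef0 horner_comp hornerD hornerX hornerC add0r.
rewrite horner_coef mulr_suml; apply: (le_trans (ler_norm_sum _ _ _)).
apply: ler_sum => -[[|i] Hi] _ /=; first by rewrite W0 mul0r normr0 mul0r.
rewrite normrM normrX exprS mulrCA [X in _ <= X]mulrC ler_wpM2l ?normr_ge0 //.
by rewrite -[X in _ <= X]mulr1 ler_wpM2l ?normr_ge0 // exprn_ile1 ?normr_ge0.
Qed.

Lemma liouville_inequality (Z : {poly int}) (x : R) (p : int) (q : nat) :
  (0 < q)%N -> root (map_poly intr Z) x -> ~~ root (map_poly intr Z) (p%:~R / q%:R : R) ->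
  `|p%:~R / q%:R - x| <= 1 :> R ->
  1 <= taylor_norm1 (map_poly intr Z) x * (q%:R ^+ size Z * `|p%:~R / q%:R - x|).
Proof.
move=> q_gt0 rootZx nrootZy yx1; apply: le_trans (int_poly_horner_rat_ge q_gt0 nrootZy) _.
rewrite mulrCA ler_wpM2l ?exprn_ge0 ?ler0n //.
exact: horner_le_dist_root.
Qed.

Lemma liouville_transcendental (x : R) :
  (forall k, exists Q : nat, rat_approx x Q (Q%:R ^- k)) -> transcendental x.
Proof.
move=> approx [Px [Px0 rootPx]].
suff : forall n (P : {poly rat}), (size P <= n)%N -> P != 0 ->
   root (map_poly ratr P) x -> False by move/(_ _ Px (leqnn _) Px0 rootPx).
elim=> [|n IH] P szP P0.
  by move: P0; rewrite -size_poly_eq0 -leqn0 szP.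
move=> rootP; have [Z [Z0 szZ rootZ]] := rat_poly_int_roots P0.
set C := taylor_norm1 (map_poly intr Z) x.
set K := Num.Def.archi_bound C.
have [Q [p [q [/andP[q2 qQ] /andP[xy_gt0 xy_le]]]]] := approx (size Z + K)%N.
set y := p%:~R / q%:R : R in xy_gt0 xy_le.
have q_gt0 : (0 < q)%N by apply: leq_trans q2.
have qk_xy : q%:R ^+ (size Z + K) * `|y - x| <= 1.
  rewrite distrC mulrC -ler_pdivlMr ?exprn_gt0 ?ltr0n // div1r.
  apply: le_trans xy_le _.
  rewrite lef_pV2 ?posrE ?exprn_gt0 ?ltr0n ?(leq_trans q_gt0) //.
  by rewrite lerXn2r ?nnegrE ?ler_nat.
have yx1 : `|y - x| <= 1.
  by apply: le_trans qk_xy; rewrite ler_peMl // exprn_ege1 // ler1n.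
have [rootPy|] := boolP (root (map_poly ratr P) y).
  (* The approximant is a rational root of P: divide it out and recurse. *)
  have ry : ratr (p%:~R / q%:R) = y by rewrite fmorph_div rmorph_int rmorph_nat.
  have rootPr : root P (p%:~R / q%:R).
    by move: rootPy; rewrite -ry /root horner_map fmorph_eq0.
  have [P1 EP] := factor_theorem _ _ rootPr.
  have P10 : P1 != 0 by apply: contra P0 => /eqP P10; rewrite EP P10 mul0r.
  apply: (IH P1 _ P10).
    by move: szP; rewrite EP size_mul ?polyXsubC_eq0 // size_XsubC addn2.
  move: rootP; rewrite /root EP rmorphM /= map_polyXsubC hornerM hornerXsubC /=.
  by rewrite ry mulf_eq0 subr_eq0 orbC -subr_eq0 -normr_eq0 (gt_eqF xy_gt0).
rewrite rootZ => nrootZy.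
have rootZx : root (map_poly intr Z) x by rewrite -rootZ.
have qK_le_C : q%:R ^+ K <= C.
  have := liouville_inequality q_gt0 rootZx nrootZy yx1.
  move=> /(ler_wpM2l (exprn_ge0 K (ler0n R q))); rewrite mulr1 => /le_trans; apply.
  have -> : q%:R ^+ K * (C * (q%:R ^+ size Z * `|y - x|))
      = C * (q%:R ^+ (size Z + K) * `|y - x|).
    by rewrite exprD mulrCA [in RHS]mulrA [in RHS](mulrC _ (q%:R ^+ K)) -!mulrA.
  by rewrite -[leRHS]mulr1 ler_wpM2l // taylor_norm1_ge0.
move: qK_le_C; apply/negP; rewrite -ltNge.
apply: (lt_le_trans (archi_boundP (taylor_norm1_ge0 _ x))).
apply: (le_trans (y := 2%:R ^+ K)); first by rewrite -natrX ler_nat ltnW // ltn_expl.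
by rewrite lerXn2r ?nnegrE ?ler0n ?ler_nat.
Qed.

End Liouville.

Lemma ler_natr_divV (R : numFieldType) (c x y : nat) : (0 < x)%N -> (0 < y)%N ->
  (c * y <= x)%N -> c%:R / x%:R <= y%:R^-1 :> R.
Proof.
by move=> x0 y0; rewrite ler_pdivrMr ?ltr0n // ler_pdivlMl ?ltr0n // -natrM ler_nat mulnC.
Qed.

Lemma ltr_natr_divV (R : numFieldType) (c x y : nat) : (0 < x)%N -> (0 < y)%N ->
  (c * y < x)%N -> c%:R / x%:R < y%:R^-1 :> R.
Proof.
by move=> x0 y0; rewrite ltr_pdivrMr ?ltr0n // ltr_pdivlMl ?ltr0n // -natrM ltr_nat mulnC.
Qed.

Lemma bernoulli_expn (g1 g2 M : nat) : (g2 < g1)%N -> (g2 ^ M * (g2 + M) <= g1 ^ M * g2)%N.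
Proof.
move=> g21; elim: M => [|M IH]; first by rewrite !expn0 !mul1n addn0.
have := leq_mul (leqnn g1) IH.
have : (g2.+1 * (g2 ^ M * (g2 + M)) <= g1 * (g2 ^ M * (g2 + M)))%N.
  by rewrite leq_mul2r g21 orbT.
rewrite !expnS; nia.
Qed.

Lemma ltn_mul_expn (c g1 g2 M : nat) : (g2 < g1)%N -> (0 < g2)%N -> (c * g2 < M)%N ->
  (c * g2 ^ M < g1 ^ M)%N.
Proof.
move=> g21 g2_gt0 cM; have := bernoulli_expn M g21.
have : (0 < g2 ^ M)%N by rewrite expn_gt0 g2_gt0.
nia.
Qed.

Section GapCriterion.
Variables (R : realType) (a : nat -> nat).
Hypothesis a_gt0 : forall n, (1 <= n)%N -> (0 < a n)%N.
Hypothesis a_gap : forall K n0 : nat, exists n, (n0 <= n)%N /\ (K * a n <= a n.+1)%N.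

Lemma transcendental_of_gap_rat_approx (x : R) (Q g C n0 : nat) :
  (0 < Q)%N -> (1 < g)%N ->
  (forall n, (n0 <= n)%N -> rat_approx x (Q ^ a n) (C%:R * g%:R ^- a n.+1)) ->
  transcendental x.
Proof.
move=> Q_gt0 g_gt1 approx; apply: liouville_transcendental => k.
have [n [n0n gap]] := a_gap (Q * k + C) n0.+1.
have n1 : (1 <= n)%N by apply: leq_trans n0n.
exists (Q ^ a n)%N; apply: rat_approx_le (approx n (ltnW n0n)).
rewrite natrX -exprM -!natrX ler_natr_divV ?expn_gt0 ?Q_gt0 ?(ltnW g_gt1) //.
(* C Q^(a n k) <= g^C g^(Q a n k) <= g^((Q k + C) a n) <= g^(a n.+1) *)
have QgQ : (Q <= g ^ Q)%N by apply: ltnW; exact: ltn_expl.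
have Qg m : (Q ^ m <= g ^ (Q * m))%N.
  by rewrite expnM; elim: m => // m IH; rewrite !expnS leq_mul.
apply: leq_trans (leq_mul (ltnW (ltn_expl C g_gt1)) (Qg (a n * k)%N)) _.
rewrite -expnD leq_pexp2l ?(ltnW g_gt1) //; apply: leq_trans gap.
have := a_gt0 n1; nia.
Qed.

End GapCriterion.

Section HalvingTail.
Variables (R : realType) (w : nat -> R).
Hypothesis w_ge0 : forall m, 0 <= w m.
Hypothesis w_halving : forall m, (1 <= m)%N -> 2 * w m.+1 <= w m.

Let S N := \sum_(1 <= m < N) w m.

Lemma halving_sum_le n N : (1 <= n <= N)%N ->
  \sum_(n <= m < N) w m + 2 * w N <= 2 * w n.
Proof.
case/andP=> n1; elim: N => [|N IH]; first by rewrite leqn0 => /eqP n0; rewrite n0 in n1.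
rewrite leq_eqVlt => /orP[/eqP <-|]; first by rewrite big_geq // add0r.
rewrite ltnS => nN; rewrite big_nat_recr //= -addrA.
apply: le_trans (IH nN); rewrite lerD2l.
have := w_halving (leq_trans n1 nN); lra.
Qed.

Lemma halving_sum_cvg : cvgn S.
Proof.
apply: nondecreasing_is_cvgn.
  apply/nondecreasing_seqP => -[|N]; first by rewrite /S !big_geq.
  by rewrite /S [X in _ <= X]big_nat_recr //= lerDl.
exists (2 * w 1) => _ [[|N] _ <-]; first by rewrite /S big_geq // mulr_ge0 ?w_ge0.
have := @halving_sum_le 1 N.+1 isT; have := w_ge0 N.+1; rewrite /S; lra.
Qed.

Lemma halving_tail_bounds n : (1 <= n)%N -> w n <= limn S - S n <= 2 * w n.
Proof.
move=> n1; apply/andP; split.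
  rewrite lerBrDl; apply: limr_ge; first exact: halving_sum_cvg.
  exists n.+1 => // N /= nN.
  rewrite /S [X in _ <= X](@big_cat_nat _ _ _ n) //= ?(leq_trans _ (ltnW nN)) // lerD2l.
  by rewrite big_ltn //= lerDl sumr_ge0.
rewrite lerBlDl; apply: limr_le; first exact: halving_sum_cvg.
exists n => // N /= nN.
rewrite /S (@big_cat_nat _ _ _ n) //= lerD2l.
have := halving_sum_le (N := N) (n := n); rewrite n1 nN => /(_ isT).
have := w_ge0 N; lra.
Qed.

End HalvingTail.

Section LacunarySeries.
Variables (R : realType) (a : nat -> nat).
Hypothesis a_incr : forall n, (1 <= n)%N -> (a n < a n.+1)%N.
Hypothesis a1_gt0 : (0 < a 1)%N.

Lemma a_homo_leq m n : (1 <= m <= n)%N -> (a m <= a n)%N.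
Proof.
case/andP=> m1; elim: n => [|n IH]; first by rewrite leqn0 => /eqP m0; rewrite m0 in m1.
rewrite leq_eqVlt => /orP[/eqP -> //|]; rewrite ltnS => mn.
exact: leq_trans (IH mn) (ltnW (a_incr (leq_trans m1 mn))).
Qed.

Lemma a_ge_id n : (1 <= n)%N -> (n <= a n)%N.
Proof.
elim: n => [//|[|n] IH] _ //; exact: leq_ltn_trans (IH isT) (a_incr _).
Qed.

Definition lacunary_sum (g : nat) : R := \big[+%R/0%R]_(1 <= n <oo) ((g%:R : R) ^- a n).
Definition lacunary_partial (g n : nat) : R := \sum_(1 <= m < n.+1) (g%:R : R) ^- a m.
Definition lacunary_numer (g n : nat) : nat := \sum_(1 <= m < n.+1) g ^ (a n - a m).

Variable g : nat.
Hypothesis g_ge2 : (2 <= g)%N.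

Let g_gt0 : (0 < g)%N. Proof. exact: ltnW. Qed.

Lemma lacunary_term_gt0 m : 0 < (g%:R : R) ^- a m.
Proof. by rewrite invr_gt0 exprn_gt0 ?ltr0n. Qed.

Lemma lacunary_term_halving m : (1 <= m)%N ->
  2 * (g%:R : R) ^- a m.+1 <= (g%:R : R) ^- a m.
Proof.
move=> m1; rewrite -!natrX ler_natr_divV ?expn_gt0 ?g_gt0 //.
rewrite -(subnKC (a_incr m1)) expnD expnS -[X in (X <= _)%N]muln1.
by rewrite leq_mul ?leq_mul // expn_gt0 g_gt0.
Qed.

Lemma lacunary_tail_bounds n :
  (g%:R : R) ^- a n.+1 <= lacunary_sum g - lacunary_partial g n
  <= 2 * (g%:R : R) ^- a n.+1.
Proof.
apply: (halving_tail_bounds (w := fun m => (g%:R : R) ^- a m)) => //.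
exact: lacunary_term_halving.
Qed.

Lemma lacunary_partialE n : (1 <= n)%N ->
  lacunary_partial g n = (lacunary_numer g n)%:R / (g%:R : R) ^+ a n.
Proof.
move=> n1; have gX0 k : (g%:R : R) ^+ k != 0.
  by rewrite expf_eq0 pnatr_eq0 (gtn_eqF g_gt0) andbF.
rewrite /lacunary_partial /lacunary_numer natr_sum mulr_suml.
apply: eq_big_nat => m /andP[m1 mn].
have amn : (a m <= a n)%N by apply: a_homo_leq; rewrite m1 -ltnS.
rewrite natrX -{2}(subnKC amn).
by rewrite exprD invfM mulrCA divff ?mulr1.
Qed.

Lemma lacunary_partial_ge n : (1 <= n)%N -> (g%:R : R) ^- a 1 <= lacunary_partial g n.
Proof.
by move=> n1; rewrite /lacunary_partial big_ltn // lerDl sumr_ge0.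
Qed.

Lemma lacunary_partial_le_sum n : lacunary_partial g n <= lacunary_sum g.
Proof.
have /andP[+ _] := lacunary_tail_bounds n.
have := lacunary_term_gt0 n.+1; lra.
Qed.

Lemma lacunary_sum_le1 : lacunary_sum g <= 1.
Proof.
have /andP[_] := lacunary_tail_bounds 1.
have := lacunary_term_halving (isT : (1 <= 1)%N).
have : 2 * (g%:R : R) ^- a 1 <= 1.
  rewrite -natrX mulrC ler_pdivrMl ?ltr0n ?expn_gt0 ?g_gt0 // mulr1 ler_nat.
  by rewrite (leq_trans g_ge2) // -{1}(expn1 g) leq_pexp2l.
rewrite /lacunary_partial big_nat1; lra.
Qed.

Lemma lacunary_numer_gt0 n : (1 <= n)%N -> (0 < lacunary_numer g n)%N.
Proof. by move=> n1; rewrite /lacunary_numer big_nat_recr //= subnn expn0 addn1. Qed.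

Lemma lacunary_numer_le n : (1 <= n)%N ->
  (lacunary_numer g n)%:R <= (g%:R : R) ^+ a n.
Proof.
move=> n1; rewrite -[leRHS]mul1r -ler_pdivrMr ?exprn_gt0 ?ltr0n //.
rewrite -lacunary_partialE //; apply: le_trans lacunary_sum_le1.
exact: lacunary_partial_le_sum.
Qed.

End LacunarySeries.

Section TailPerturbation.
Variables (R : realFieldType) (x1 x2 s1 s2 e1 e2 : R).
Hypothesis tail1 : e1 <= x1 - s1 <= 2 * e1.
Hypothesis tail2 : e2 <= x2 - s2 <= 2 * e2.
Hypothesis e1_gt0 : 0 < e1.

Lemma tail_perturb_add : e1 <= e2 -> 0 < `|x1 + x2 - (s1 + s2)| <= 4 * e2.
Proof.
move=> e12; move: tail1 tail2 e1_gt0 => /andP[t1l t1u] /andP[t2l t2u] e1p.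
by rewrite gtr0_norm; [apply/andP; split|]; lra.
Qed.

Lemma tail_perturb_sub : 2 * e1 < e2 -> 0 < `|x1 - x2 - (s1 - s2)| <= 2 * e2.
Proof.
move=> e12; move: tail1 tail2 e1_gt0 => /andP[t1l t1u] /andP[t2l t2u] e1p.
by rewrite ltr0_norm; [apply/andP; split|]; lra.
Qed.

Lemma tail_perturb_mul : e1 <= e2 -> 0 < s1 -> 0 < s2 -> x1 <= 1 -> x2 <= 1 ->
  0 < `|x1 * x2 - s1 * s2| <= 4 * e2.
Proof.
move=> e12 s1_gt0 s2_gt0 x1_le1 x2_le1.
move: tail1 tail2 e1_gt0 => /andP[t1l t1u] /andP[t2l t2u] e1p.
have -> : x1 * x2 - s1 * s2 = (x1 - s1) * x2 + s1 * (x2 - s2) by ring.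
have u0 : 0 < (x1 - s1) * x2 by nra.
have u1 : (x1 - s1) * x2 <= x1 - s1 by nra.
have v0 : 0 < s1 * (x2 - s2) by nra.
have v1 : s1 * (x2 - s2) <= x2 - s2 by nra.
by rewrite gtr0_norm; [apply/andP; split|]; lra.
Qed.

Lemma tail_perturb_div (c1 c2 : R) : 0 < c1 <= s1 -> 0 < c2 <= s2 ->
  x1 <= 1 -> x2 <= 1 -> 2 * e1 < c1 * e2 ->
  0 < `|x1 / x2 - s1 / s2| <= 2 / c2 ^+ 2 * e2.
Proof.
move=> /andP[c1_gt0 c1s1] /andP[c2_gt0 c2s2] x1_le1 x2_le1 e12.
move: tail1 tail2 e1_gt0 => /andP[t1l t1u] /andP[t2l t2u] e1p.
have s2_gt0 : 0 < s2 by lra.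
have x2_gt0 : 0 < x2 by lra.
have -> : x1 / x2 - s1 / s2 = ((x1 - s1) * s2 - s1 * (x2 - s2)) / (x2 * s2).
  by field; rewrite !gt_eqF.
have u0 : 0 <= (x1 - s1) * s2 by nra.
have u1 : (x1 - s1) * s2 <= 2 * e1 by nra.
have v0 : c1 * e2 <= s1 * (x2 - s2) by nra.
have v1 : s1 * (x2 - s2) <= 2 * e2 by nra.
have c2x2s2 : c2 ^+ 2 <= x2 * s2 by rewrite expr2; nra.
set N := (x1 - s1) * s2 - s1 * (x2 - s2).
have N_lt0 : N < 0 by rewrite /N; lra.
have D_gt0 : 0 < x2 * s2 by rewrite mulr_gt0.
have -> : `|N / (x2 * s2)| = - N / (x2 * s2).
  by rewrite normrM normfV ltr0_norm // gtr0_norm.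
rewrite divr_gt0 ?oppr_gt0 //= ler_pdivrMr //.
apply: le_trans (_ : 2 * e2 <= _); first by rewrite /N; lra.
have -> : 2 / c2 ^+ 2 * e2 * (x2 * s2) = 2 * e2 * (x2 * s2 / c2 ^+ 2).
  by field; rewrite gt_eqF.
have e2_ge0 : 0 <= e2 by lra.
by rewrite -[leLHS]mulr1 ler_wpM2l ?mulr_ge0 // ler_pdivlMr ?exprn_gt0 // mul1r.
Qed.

End TailPerturbation.

Section LacunaryPair.
Variables (R : realType) (a : nat -> nat).
Hypothesis a_incr : forall n, (1 <= n)%N -> (a n < a n.+1)%N.
Hypothesis a1_gt0 : (0 < a 1)%N.
Variables g1 g2 : nat.
Hypothesis g2_ge2 : (2 <= g2)%N.
Hypothesis g21 : (g2 < g1)%N.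

Let g1_ge2 : (2 <= g1)%N. Proof. exact: ltnW (leq_ltn_trans g2_ge2 g21). Qed.
Let g1_gt0 : (0 < g1)%N. Proof. exact: ltnW g1_ge2. Qed.
Let g2_gt0 : (0 < g2)%N. Proof. exact: ltnW g2_ge2. Qed.
Local Notation x1 := (lacunary_sum R a g1).
Local Notation x2 := (lacunary_sum R a g2).
Local Notation s1 := (lacunary_partial R a g1).
Local Notation s2 := (lacunary_partial R a g2).
Local Notation A1 := (lacunary_numer a g1).
Local Notation A2 := (lacunary_numer a g2).
Local Notation e g M := ((g%:R : R) ^- M).

Let tail1 n : e g1 (a n.+1) <= x1 - s1 n <= 2 * e g1 (a n.+1).
Proof. exact: lacunary_tail_bounds. Qed.

Let tail2 n : e g2 (a n.+1) <= x2 - s2 n <= 2 * e g2 (a n.+1).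
Proof. exact: lacunary_tail_bounds. Qed.

Let e_gt0 M g : (0 < g)%N -> 0 < e g M.
Proof. by move=> g_gt0; rewrite invr_gt0 exprn_gt0 ?ltr0n. Qed.

Let e_le M : e g1 M <= e g2 M.
Proof.
rewrite lef_pV2 ?posrE ?exprn_gt0 ?ltr0n ?g1_gt0 ?g2_gt0 //.
by rewrite lerXn2r ?nnegrE ?ler0n // ler_nat ltnW.
Qed.

Let e_lt c M : (c * g2 < M)%N -> c%:R * e g1 M < e g2 M.
Proof.
move=> cM; rewrite -!natrX ltr_natr_divV ?expn_gt0 ?g1_gt0 ?g2_gt0 //.
by rewrite ltn_mul_expn // ltnW.
Qed.

Let e_lt_eventually c n : (c * g2 <= n)%N -> c%:R * e g1 (a n.+1) < e g2 (a n.+1).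
Proof.
move=> n_ge; apply: e_lt; apply: leq_ltn_trans n_ge _.
exact: leq_trans (ltnSn n) (a_ge_id a_incr a1_gt0 (ltn0Sn n)).
Qed.

Let a_gt0 n : (1 <= n)%N -> (0 < a n)%N.
Proof. by move=> n1; apply: leq_trans n1 (a_ge_id a_incr a1_gt0 n1). Qed.

Let q_ge2 n : (1 <= n)%N -> (2 <= (g1 * g2) ^ a n)%N.
Proof.
move=> n1; apply: (leq_trans _ (leq_pexp2l _ (a_gt0 n1))); last by rewrite muln_gt0 g1_gt0.
by rewrite expn1 (leq_trans g2_ge2) // leq_pmull // ltnW.
Qed.

Let gX_neq0 g M : (0 < g)%N -> (g%:R : R) ^+ M != 0.
Proof. by move=> g_gt0; rewrite expf_neq0 // pnatr_eq0 -lt0n. Qed.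

Lemma lacunary_add_rat_approx n : (1 <= n)%N ->
  rat_approx (x1 + x2) ((g1 * g2) ^ a n) (4%:R * e g2 (a n.+1)).
Proof.
move=> n1; exists (A1 n * g2 ^ a n + A2 n * g1 ^ a n)%N, ((g1 * g2) ^ a n)%N.
rewrite q_ge2 //= leqnn; split => //.
have -> : (A1 n * g2 ^ a n + A2 n * g1 ^ a n)%N%:~R / ((g1 * g2) ^ a n)%N%:R = s1 n + s2 n.
  rewrite !lacunary_partialE // -pmulrn natrD !natrM !natrX natrM exprMn.
  by field; rewrite !gX_neq0.
by apply: (tail_perturb_add (tail1 n) (tail2 n)); [exact: e_gt0 | exact: e_le].
Qed.

Lemma lacunary_sub_rat_approx n : (2 * g2 <= n)%N ->
  rat_approx (x1 - x2) ((g1 * g2) ^ a n) (2%:R * e g2 (a n.+1)).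
Proof.
move=> n_ge; have n1 : (1 <= n)%N by apply: leq_trans n_ge; rewrite muln_gt0.
exists ((A1 n * g2 ^ a n)%N%:Z - (A2 n * g1 ^ a n)%N%:Z), ((g1 * g2) ^ a n)%N.
rewrite q_ge2 //= leqnn; split => //.
have -> : ((A1 n * g2 ^ a n)%N%:Z - (A2 n * g1 ^ a n)%N%:Z)%:~R / ((g1 * g2) ^ a n)%N%:R
    = s1 n - s2 n.
  rewrite !lacunary_partialE // rmorphB /= -!pmulrn !natrM !natrX natrM exprMn.
  by field; rewrite !gX_neq0.
apply: (tail_perturb_sub (tail1 n) (tail2 n)); first exact: e_gt0.
exact: e_lt_eventually.
Qed.

Lemma lacunary_mul_rat_approx n : (1 <= n)%N ->
  rat_approx (x1 * x2) ((g1 * g2) ^ a n) (4%:R * e g2 (a n.+1)).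
Proof.
move=> n1; exists (A1 n * A2 n)%N, ((g1 * g2) ^ a n)%N.
rewrite q_ge2 //= leqnn; split => //.
have -> : (A1 n * A2 n)%N%:~R / ((g1 * g2) ^ a n)%N%:R = s1 n * s2 n.
  rewrite !lacunary_partialE // -pmulrn !natrM !natrX natrM exprMn.
  by field; rewrite !gX_neq0.
apply: (tail_perturb_mul (tail1 n) (tail2 n)).
- exact: e_gt0.
- exact: e_le.
- exact: lt_le_trans (e_gt0 (a 1) g1_gt0) (lacunary_partial_ge R a g1 n1).
- exact: lt_le_trans (e_gt0 (a 1) g2_gt0) (lacunary_partial_ge R a g2 n1).
- exact: lacunary_sum_le1.
- exact: lacunary_sum_le1.
Qed.

Lemma lacunary_div_rat_approx n : (2 * g1 ^ a 1 * g2 <= n)%N ->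
  rat_approx (x1 / x2) ((g1 * g2) ^ a n) ((2 * g2 ^ (a 1 * 2))%:R * e g2 (a n.+1)).
Proof.
move=> n_ge; have n1 : (1 <= n)%N.
  by apply: leq_trans n_ge; rewrite !muln_gt0 expn_gt0 g1_gt0 g2_gt0.
have A2_gt0 := lacunary_numer_gt0 a g2 n1.
exists (A1 n * g2 ^ a n)%N, (A2 n * g1 ^ a n)%N; split.
  apply/andP; split.
    apply: leq_trans (leq_mul A2_gt0 (leqnn _)); rewrite mul1n.
    by rewrite (leq_trans g1_ge2) // -{1}(expn1 g1) leq_pexp2l // a_gt0.
  rewrite expnMn mulnC leq_mul2l -(ler_nat R) natrX.
  by rewrite lacunary_numer_le // orbT.
have -> : (A1 n * g2 ^ a n)%N%:~R / (A2 n * g1 ^ a n)%N%:R = s1 n / s2 n.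
  rewrite !lacunary_partialE // -pmulrn !natrM !natrX.
  by field; rewrite !gX_neq0 // pnatr_eq0 -lt0n A2_gt0.
have -> : (2 * g2 ^ (a 1 * 2))%:R * e g2 (a n.+1) = 2 / e g2 (a 1) ^+ 2 * e g2 (a n.+1).
  by rewrite natrM natrX exprM exprVn invrK.
apply: (@tail_perturb_div _ _ _ _ _ _ _ (tail1 n) (tail2 n) _ (e g1 (a 1))).
- exact: e_gt0.
- by rewrite e_gt0 // lacunary_partial_ge.
- by rewrite e_gt0 // lacunary_partial_ge.
- exact: lacunary_sum_le1.
- exact: lacunary_sum_le1.
have := e_lt_eventually n_ge.
rewrite -(ltr_pM2l (e_gt0 (a 1) g1_gt0)) natrM natrX !mulrA.
have -> : g1%:R ^- a 1 * 2 * g1%:R ^+ a 1 / g1%:R ^+ a n.+1 = 2 / g1%:R ^+ a n.+1 :> R.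
  by field; rewrite !gX_neq0.
by [].
Qed.

End LacunaryPair.

Section PowerTower.
Variables (R : realType) (beta : R) (a : nat -> nat).
Hypothesis beta_gt0 : 0 < beta.
Hypothesis a1_ge2 : (2 <= a 1)%N.
Hypothesis a_rec : forall n, (1 <= n)%N -> ((a n.+1)%:R : R) = (a n)%:R `^ (1 + beta).

Lemma power_tower_split n : (1 <= n)%N ->
  ((a n.+1)%:R : R) = (a n)%:R * (a n)%:R `^ beta.
Proof.
by move=> n1; rewrite a_rec // powRD ?powRr1 ?ler0n // gt_eqF // addr_gt0.
Qed.

Let power_tower_step n : (1 <= n)%N -> (2 <= a n)%N -> (a n < a n.+1)%N.
Proof.
move=> n1 an2; rewrite -(ltr_nat R) power_tower_split // ltr_pMr ?ltr0n ?(ltnW an2) //.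
have := @gt0_ltr_powR R beta beta_gt0 1 (a n)%:R.
by rewrite powR1; apply; rewrite ?nnegrE ?ler0n ?ltr1n.
Qed.

Lemma power_tower_ge2 n : (1 <= n)%N -> (2 <= a n)%N.
Proof.
elim: n => [|[|n] IH] n1 //.
have an2 := IH isT.
by apply: leq_trans an2 (ltnW (power_tower_step _ an2)).
Qed.

Lemma power_tower_incr n : (1 <= n)%N -> (a n < a n.+1)%N.
Proof. by move=> n1; apply: power_tower_step n1 (power_tower_ge2 n1). Qed.

Lemma power_tower_gap K n0 : exists n, (n0 <= n)%N /\ (K * a n <= a n.+1)%N.
Proof.
set T : R := K%:R `^ beta^-1.
have T_ge0 : 0 <= T by rewrite powR_ge0.
set n := maxn n0 (Num.Def.archi_bound T).+1.
have n1 : (1 <= n)%N by rewrite leq_max orbT.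
exists n; split; first by rewrite leq_maxl.
have Tn : T <= (a n)%:R.
  apply: le_trans (ltW (archi_boundP T_ge0)) _; rewrite ler_nat.
  apply: (leq_trans _ (a_ge_id power_tower_incr (ltnW a1_ge2) n1)).
  by rewrite leq_max leqnSn orbT.
rewrite -(ler_nat R) natrM power_tower_split // mulrC ler_wpM2l ?ler0n //.
have := @ge0_ler_powR R beta (ltW beta_gt0) T (a n)%:R.
rewrite /T -powRrM mulVf ?gt_eqF // powRr1 ?ler0n //.
by apply; rewrite ?nnegrE ?ler0n.
Qed.

End PowerTower.

Theorem theorem1 (R : realType) (g1 g2 : nat) (beta : R) (a : nat -> nat) :
  (2 <= g2)%N -> (g2 < g1)%N -> 0 < beta ->
  (forall n, (1 <= n)%N -> (0 < a n)%N) ->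
  (2 <= a 1)%N ->
  (forall n, (1 <= n)%N -> ((a n.+1)%:R : R) = (a n)%:R `^ (1 + beta)) ->
  let theta1 : R := \big[+%R/0%R]_(1 <= n <oo) ((g1%:R : R) ^- a n) in
  let theta2 : R := \big[+%R/0%R]_(1 <= n <oo) ((g2%:R : R) ^- a n) in
  [/\ transcendental (theta1 + theta2), transcendental (theta1 - theta2),
      transcendental (theta1 * theta2) & transcendental (theta1 / theta2)].
Proof.
move=> g2_ge2 g21 beta_gt0 a_gt0 a1_ge2 a_rec theta1 theta2.
have a_incr := power_tower_incr beta_gt0 a1_ge2 a_rec.
have a1_gt0 := a_gt0 1 isT.
have crit := transcendental_of_gap_rat_approx a_gt0 (power_tower_gap beta_gt0 a1_ge2 a_rec).
have Q_gt0 : (0 < g1 * g2)%N by nia.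
rewrite /theta1 /theta2; split; apply: (crit R _ _ _ _ _ Q_gt0 g2_ge2) => n.
- exact: lacunary_add_rat_approx.
- exact: lacunary_sub_rat_approx.
- exact: lacunary_mul_rat_approx.
- exact: lacunary_div_rat_approx.
Qed.
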